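(* Let $L$ be an $n\times n$ nonsingular M-matrix with integer entries. If $f\in\mathbb{Z}^n$ is $z$-superstable with respect to $L$, then $D^L-f$ is a critical configuration of $L$.
   Context: A Z-matrix is a square real matrix whose off-diagonal entries are all $\le 0$. A nonsingular M-matrix is a Z-matrix $L$ that is invertible with $L^{-1}$ having all entries nonnegative (its diagonal entries are then positive). Vector inequalities are entrywise; $e_i$ is the $i$th standard basis vector. A vector $f\in\mathbb{Z}^n$ with $f\ge0$ is $z$-superstable if for every $z\in\mathbb{Z}^n$ with $z\ge0$, $z\ne0$, there is $i$ with $f_i-(Lz)_i<0$. $D^L\in\mathbb{Z}^n$ is defined by $D^L_i=L_{ii}-1$. A vector $c\in\mathbb{Z}^n$ is stable if $c_i<L_{ii}$ for all $i$ (i.e. $c\le D^L$). A vector $c\in\mathbb{Z}^n$ is a critical configuration if it is stable and there exist $g\in\mathbb{Z}^n$ with $g_i\ge L_{ii}$ for all $i$ and indices $i_1,\dots,i_k$ such that $c=g-\sum_{j=1}^kLe_{i_j}$ and, writing $g^\ell=g-\sum_{j=1}^\ell Le_{i_j}$ ($g^0=g$), one has $g^\ell_{i_{\ell+1}}\ge L_{i_{\ell+1}i_{\ell+1}}$ for all $0\le\ell<k$ (each firing in the sequence is legal). *)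

From HB Require Import structures.
From mathcomp Require Import all_boot all_order all_algebra.
Set Implicit Arguments. Unset Strict Implicit. Unset Printing Implicit Defensive.
Import Order.TTheory GRing.Theory Num.Theory.
Local Open Scope ring_scope.

Definition Zmatrix (n : nat) (L : 'M[int]_n) : Prop :=
  forall i j : 'I_n, i != j -> L i j <= 0.

(* Nonsingular M-matrix (integer entries): a Z-matrix, invertible (over the
   rationals, i.e. as a real matrix), whose inverse has nonnegative entries. *)
Definition nonsingular_Mmatrix (n : nat) (L : 'M[int]_n) : Prop :=
  Zmatrix L /\
  let Lq : 'M[rat]_n := map_mx (fun x : int => x%:~R) L in
  Lq \in unitmx /\ forall i j : 'I_n, 0 <= invmx Lq i j.

Definition evec (n : nat) (i : 'I_n) : 'cV[int]_n := delta_mx i 0.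

Definition z_superstable (n : nat) (L : 'M[int]_n) (f : 'cV[int]_n) : Prop :=
  (forall i, 0 <= f i 0) /\
  forall z : 'cV[int]_n, (forall i, 0 <= z i 0) -> z != 0 ->
    exists i, f i 0 - (L *m z) i 0 < 0.

Definition DL (n : nat) (L : 'M[int]_n) : 'cV[int]_n := \col_i (L i i - 1).

Definition stable (n : nat) (L : 'M[int]_n) (c : 'cV[int]_n) : Prop :=
  forall i, c i 0 < L i i.

Definition fire_seq (n : nat) (L : 'M[int]_n) (g : 'cV[int]_n) (s : seq 'I_n)
  : 'cV[int]_n := g - \sum_(i <- s) L *m evec i.

Definition legal_seq (n : nat) (L : 'M[int]_n) (g : 'cV[int]_n) (s : seq 'I_n)
  : Prop :=
  forall (l : nat) (Hl : (l < size s)%N),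
    let i := tnth (in_tuple s) (Ordinal Hl) in
    L i i <= fire_seq L g (take l s) i 0.

Definition critical (n : nat) (L : 'M[int]_n) (c : 'cV[int]_n) : Prop :=
  stable L c /\
  exists (g : 'cV[int]_n) (s : seq 'I_n),
    (forall i, L i i <= g i 0) /\ legal_seq L g s /\ c = fire_seq L g s.

(* Choose an integer z >= 0 with L z = |det L| (1 + f) (possible since L^-1 >= 0) and
   start from g := D^L - f + L z, which dominates the diagonal.  Then fire greedily
   back down to D^L - f: as long as the remaining firing vector w >= 0 is nonzero,
   superstability of f gives a site i with w_i > 0 at which D^L - f + L w holds at
   least L_ii chips, since every site with w_i = 0 only gains chips from L w. *)
From HB Require Import structures.
From mathcomp Require Import all_boot all_order all_algebra.
From mathcomp Require Import zify.
Import Order.TTheory GRing.Theory Num.Theory.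
Local Open Scope ring_scope.
Set Implicit Arguments. Unset Strict Implicit.

Lemma diag_le_DL_subD (n : nat) (L : 'M[int]_n) (f v : 'cV[int]_n) i :
  f i 0 < v i 0 -> L i i <= (DL L - f + v) i 0.
Proof. by rewrite !mxE -!addrA lerDl addrA -opprD addrC subr_ge0 lez1D. Qed.

Section LegalFiring.

Variables (n : nat) (L : 'M[int]_n).

Definition fires_to (g c : 'cV[int]_n) : Prop :=
  exists s, legal_seq L g s /\ fire_seq L g s = c.

Lemma fire_seq_rcons (g : 'cV[int]_n) s i :
  fire_seq L g (rcons s i) = fire_seq L g s - L *m evec i.
Proof. by rewrite /fire_seq big_rcons /= opprD addrA. Qed.

Lemma legal_seq_rcons (g : 'cV[int]_n) s i :
  legal_seq L g s -> L i i <= fire_seq L g s i 0 -> legal_seq L g (rcons s i).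
Proof.
move=> legal_s legal_i l l_lt /=.
rewrite (tnth_nth i) /= nth_rcons -cats1 take_cat.
case: (ltnP l (size s)) => [l_lt_s | s_le_l].
  by have := legal_s l l_lt_s; rewrite /= (tnth_nth i).
have -> : l = size s by move: l_lt; rewrite size_rcons ltnS => l_le; lia.
by rewrite subnn take0 cats0 /= eqxx.
Qed.

Lemma fires_to_refl (g : 'cV[int]_n) : fires_to g g.
Proof. by exists [::]; split=> [l //|]; rewrite /fire_seq big_nil subr0. Qed.

Lemma fires_to_fire (g c : 'cV[int]_n) i :
  fires_to g c -> L i i <= c i 0 -> fires_to g (c - L *m evec i).
Proof.
move=> [s [legal_s <-]] legal_i; exists (rcons s i).
by split; [apply: legal_seq_rcons | rewrite fire_seq_rcons].
Qed.

Hypothesis zL : Zmatrix L.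

Variable f : 'cV[int]_n.
Hypothesis sf : z_superstable L f.

Lemma superstable_legal_site (w : 'cV[int]_n) :
  (forall i, 0 <= w i 0) -> w != 0 ->
  exists2 i, 0 < w i 0 & L i i <= (DL L - f + L *m w) i 0.
Proof.
move=> w_ge0 w_neq0; have [f_ge0 f_sup] := sf.
have [i unstable_i] := f_sup w w_ge0 w_neq0; exists i; last first.
  by apply: diag_le_DL_subD; rewrite -subr_lt0.
rewrite lt_def w_ge0 andbT; apply: contraTneq unstable_i => w_i0.
have Lw_i_le0 : (L *m w) i 0 <= 0.
  rewrite mxE (bigD1 i) //= w_i0 mulr0 add0r; apply: sumr_le0 => j ji.
  by apply: mulr_le0_ge0; [apply: zL; rewrite eq_sym | apply: w_ge0].
by rewrite -leNgt subr_ge0 (le_trans Lw_i_le0).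
Qed.

Lemma superstable_fires_down (g w : 'cV[int]_n) :
  (forall i, 0 <= w i 0) -> fires_to g (DL L - f + L *m w) -> fires_to g (DL L - f).
Proof.
move=> w_ge0 reach_w; have [k] : exists k : nat, \sum_i w i 0 = k%:Z.
  by exists `|(\sum_i w i 0)%R|%N; rewrite gez0_abs // sumr_ge0.
elim: k w w_ge0 reach_w => [|k IH] w w_ge0 reach_w Ew.
  suff w0 : w = 0 by rewrite w0 mulmx0 addr0 in reach_w.
  apply/matrixP => i j; rewrite (ord1 j) mxE; apply/eqP; rewrite eq_le w_ge0 andbT.
  have : w i 0 <= \sum_j w j 0 by rewrite (bigD1 i) //= lerDl sumr_ge0.
  by rewrite Ew.
have w_neq0 : w != 0 by apply: contra_eqN Ew => /eqP ->; rewrite big1 // => i; rewrite mxE.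
have [i w_i_gt0 legal_i] := superstable_legal_site w_ge0 w_neq0.
apply: (IH (w - evec i)).
- by move=> j; rewrite !mxE; case: eqVneq => [->|] /=; [lia | rewrite subr0].
- by rewrite mulmxBr addrA; apply: fires_to_fire.
- rewrite (eq_bigr (fun j => w j 0 - (j == i)%:R)); last by move=> j; rewrite !mxE andbT.
  by rewrite sumrB Ew (bigD1 i) //= eqxx big1 ?addr0 => [|j /negbTE->]; lia.
Qed.

End LegalFiring.

Lemma nonsingular_Mmatrix_det_neq0 (n : nat) (L : 'M[int]_n) :
  nonsingular_Mmatrix L -> \det L != 0.
Proof. by move=> [_ [+ _]]; rewrite unitmxE det_map_mx unitfE intr_eq0. Qed.

Lemma Mmatrix_scaled_preimage (n : nat) (L : 'M[int]_n) (u : 'cV[int]_n) :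
  nonsingular_Mmatrix L -> (forall i, 0 <= u i 0) ->
  exists2 z : 'cV[int]_n, (forall i, 0 <= z i 0) & L *m z = `|\det L| *: u.
Proof.
move=> ML u_ge0; have detL_neq0 := nonsingular_Mmatrix_det_neq0 ML.
have [_ [L_unit invL_ge0]] := ML.
set Lq := map_mx _ L in L_unit invL_ge0.
have detLq : \det Lq = (\det L)%:~R by apply: det_map_mx.
(* Over the rationals this witness is |det L| L^-1 u, whence its nonnegativity. *)
exists (Num.sg (\det L) *: (\adj L *m u)); last first.
  by rewrite -scalemxAr mulmxA mul_mx_adj mul_scalar_mx scalerA normrEsg.
have zq : map_mx intr (Num.sg (\det L) *: (\adj L *m u)) =
          (`|\det L|)%:~R *: (invmx Lq *m map_mx intr u) :> 'cV[rat]_n.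
  rewrite map_mxZ map_mxM map_mx_adj /invmx L_unit -scalemxAl scalerA -/Lq.
  by rewrite detLq normrEsg rmorphM /= -mulrA mulfV ?mulr1 // intr_eq0.
move=> i; move/matrixP: zq => /(_ i 0); rewrite !mxE => zq_i.
rewrite -(ler0z rat) zq_i mulr_ge0 ?ler0z // sumr_ge0 // => j _.
by rewrite mxE mulr_ge0 ?invL_ge0 ?ler0z.
Qed.

Theorem mainTheorem12 (n : nat) (L : 'M[int]_n) (f : 'cV[int]_n) :
  nonsingular_Mmatrix L -> z_superstable L f -> critical L (DL L - f).
Proof.
move=> ML sf; have [f_ge0 _] := sf; have zL := proj1 ML.
split=> [i|]; first by rewrite !mxE -addrA gtrDl subr_lt0 (lt_le_trans _ (f_ge0 i)).
set u : 'cV[int]_n := \col_i (1 + f i 0).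
have u_ge0 i : 0 <= u i 0 by rewrite mxE; apply: addr_ge0.
have [z z_ge0 Lz] := Mmatrix_scaled_preimage ML u_ge0.
have detL_gt0 : 0 < `|\det L| by rewrite normr_gt0 nonsingular_Mmatrix_det_neq0.
have [s [legal_s fire_s]] :=
  superstable_fires_down zL sf z_ge0 (fires_to_refl L (DL L - f + L *m z)).
exists (DL L - f + L *m z), s; split=> // i.
apply: diag_le_DL_subD; rewrite Lz !mxE -lez1D ler_peMl //.
by have := u_ge0 i; rewrite mxE.
Qed.
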